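(* A ring $R$ is feckly clean if and only if both of the following hold: (1) $\operatorname{Max}(R)$ is strongly zero-dimensional; (2) for any two distinct maximal ideals $M$ and $N$ of $R$ there exist $a,b\in R$ such that $a\notin M$, $b\notin N$ and $aRb\subseteq J(R)$.
   Context: Rings are associative with identity, not necessarily commutative; ideals are two-sided; $J(R)$ is the Jacobson radical. An element $u\in R$ is full if $RuR=R$. An element $a\in R$ is feckly clean if there exist $e\in R$ and a full element $u\in R$ with $a=e+u$ and $eR(1-e)\subseteq J(R)$; $R$ is feckly clean if every element is feckly clean. $\operatorname{Max}(R)$ is the set of all maximal ideals of $R$, topologized so that the closed sets are exactly the sets $V(I)=\{P\in\operatorname{Max}(R): I\subseteq P\}$ for ideals $I$. A topological space $X$ is strongly zero-dimensional if for any two disjoint closed sets $A,B\subseteq X$ there exist disjoint clopen sets $C_1,C_2$ with $A\subseteq C_1$ and $B\subseteq C_2$. *)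

From HB Require Import structures.
From mathcomp Require Import all_boot all_order all_algebra.
Set Implicit Arguments. Unset Strict Implicit. Unset Printing Implicit Defensive.
Import GRing.Theory.
Local Open Scope ring_scope.

Section Defs.
Variable R : pzRingType.

Definition subsetR (I K : R -> Prop) : Prop := forall x, I x -> K x.

Definition is_ideal (I : R -> Prop) : Prop :=
  [/\ I 0, (forall x y, I x -> I y -> I (x - y)),
      (forall r x, I x -> I (r * x)) & (forall r x, I x -> I (x * r))].

Definition is_left_ideal (I : R -> Prop) : Prop :=
  [/\ I 0, (forall x y, I x -> I y -> I (x - y)) & (forall r x, I x -> I (r * x))].

Definition maximal_ideal (M : R -> Prop) : Prop :=
  [/\ is_ideal M, ~ M 1 &
      forall I, is_ideal I -> subsetR M I -> subsetR I M \/ I 1].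

Definition maximal_left_ideal (M : R -> Prop) : Prop :=
  [/\ is_left_ideal M, ~ M 1 &
      forall I, is_left_ideal I -> subsetR M I -> subsetR I M \/ I 1].

Definition jacobson (x : R) : Prop :=
  forall M, maximal_left_ideal M -> M x.

(* u is full: RuR = R, i.e. the two-sided ideal RuR (finite sums of r u s)
   is all of R, equivalently contains 1. *)
Definition full (u : R) : Prop :=
  exists s : seq (R * R), \sum_(p <- s) p.1 * u * p.2 = 1.

Definition feckly_clean_elt (a : R) : Prop :=
  exists e u : R, [/\ a = e + u, full u & forall r, jacobson (e * r * (1 - e))].

Definition feckly_clean : Prop := forall a : R, feckly_clean_elt a.

Definition MaxSpec : Type := {M : R -> Prop | maximal_ideal M}.

Definition max_closed (S : MaxSpec -> Prop) : Prop :=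
  exists I, is_ideal I /\ forall P : MaxSpec, S P <-> subsetR I (proj1_sig P).

End Defs.

Definition strongly_zero_dimensional (X : Type) (closed : (X -> Prop) -> Prop) : Prop :=
  forall A B : X -> Prop, closed A -> closed B -> (forall x, ~ (A x /\ B x)) ->
  exists C1 C2 : X -> Prop,
    [/\ closed C1 /\ closed (fun x => ~ C1 x),
        closed C2 /\ closed (fun x => ~ C2 x),
        (forall x, ~ (C1 x /\ C2 x)),
        (forall x, A x -> C1 x) & (forall x, B x -> C2 x)].

From mathcomp Require Import all_boot all_order all_algebra.
From mathcomp Require Import boolp classical_sets.
Set Implicit Arguments. Unset Strict Implicit. Unset Printing Implicit Defensive.
Import GRing.Theory.

(* Write V(y) for the set of maximal ideals containing y.  Maximal ideals are
   prime and contain J(R), so when eR(1 - e) ⊆ J(R) every maximal ideal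
   contains exactly one of e and 1 - e: V(e) and V(1 - e) are complementary
   clopen sets.  Disjoint closed sets V(I), V(K) have I + K = R, so some a ∈ I
   has 1 - a ∈ K; as a full element lies in no maximal ideal, a feckly clean
   decomposition a = e + u forces V(I) ⊆ V(1 - e) and V(K) ⊆ V(e).  The same
   argument with two distinct maximal ideals gives condition (2).

   Conversely, separate V(a) from V(1 - a) by a clopen partition V(I) ⊔ V(K)
   of Max(R).  Condition (2) and primeness first give d ≡ 1 (mod I) and k ∈ K
   with dR(1 - k) ⊆ J(R); comaximality of {x ∈ K | xR(1 - k) ⊆ J(R)} with the
   ideal of those y ∈ I such that xRy ⊆ J(R) whenever xR(1 - k) ⊆ J(R) then
   yields e ∈ K with 1 - e ∈ I and eR(1 - e) ⊆ J(R).  Now a - e lies in no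
   maximal ideal, i.e. it is full. *)

Local Open Scope classical_set_scope.

Lemma Zorn_above T (good : set (set T)) (I : set T) :
  (forall C : set (set T), C `<=` good -> total_on C subset -> C !=set0 ->
     good (\bigcup_(X in C) X)) ->
  good I -> exists M, [/\ good M, I `<=` M & forall N, good N -> M `<=` N -> N `<=` M].
Proof.
move=> good_chain gI.
(* Zorn on the sets X with good (I ∪ X): this makes the empty chain harmless. *)
have [|A [gIA Amax]] := Zorn_bigcup (P := fun X => good (I `|` X)).
  move=> F FP Ftot; have [neF|emptyF] := pselect (F !=set0); last first.
    suff -> : F = set0 by rewrite bigcup_set0 setU0.
    by apply/seteqP; split => // X FX; apply: emptyF; exists X.
  rewrite -bigcupUr // -(bigcup_image _ _ id); apply: good_chain.
  - by move=> _ [X FX <-]; apply: FP.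
  - move=> _ _ [X FX <-] [Y FY <-].
    by case: (Ftot X Y FX FY) => ?; [left|right]; apply: setUS.
  - by case: neF => X FX; exists (I `|` X), X.
exists (I `|` A); split => // N gN AN.
have NA : N `<=` A.
  apply: contrapT => nNA; apply: (Amax N).
    by split => // x Ax; apply: AN; right.
  by rewrite (setUidPr _ _).2 // => x Ix; apply: AN; left.
by move=> x Nx; right; apply: NA.
Qed.

Local Close Scope classical_set_scope.
Local Open Scope ring_scope.

Section Ideals.
Variable R : pzRingType.
Implicit Types (I K L M N : R -> Prop) (a b c d e j k r s u x y : R).
Local Notation J := (@jacobson R).

Lemma lideal0 L : is_left_ideal L -> L 0. Proof. by case. Qed.

Lemma lidealB L x y : is_left_ideal L -> L x -> L y -> L (x - y).
Proof. by case=> _ + _; apply. Qed.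

Lemma lidealMl L r x : is_left_ideal L -> L x -> L (r * x).
Proof. by case=> _ _; apply. Qed.

Lemma lidealN L x : is_left_ideal L -> L x -> L (- x).
Proof. by move=> hL Lx; rewrite -sub0r; apply: lidealB => //; apply: lideal0. Qed.

Lemma lidealD L x y : is_left_ideal L -> L x -> L y -> L (x + y).
Proof. by move=> hL Lx Ly; rewrite -[y]opprK; apply: lidealB => //; apply: lidealN. Qed.

Lemma ideal_lideal I : is_ideal I -> is_left_ideal I. Proof. by case. Qed.

Lemma ideal_of_lideal I :
  is_left_ideal I -> (forall r x, I x -> I (x * r)) -> is_ideal I.
Proof. by case. Qed.

Lemma ideal0 I : is_ideal I -> I 0. Proof. by move/ideal_lideal/lideal0. Qed.

Lemma idealB I x y : is_ideal I -> I x -> I y -> I (x - y).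
Proof. by move/ideal_lideal/lidealB; apply. Qed.

Lemma idealD I x y : is_ideal I -> I x -> I y -> I (x + y).
Proof. by move/ideal_lideal/lidealD; apply. Qed.

Lemma idealMl I r x : is_ideal I -> I x -> I (r * x).
Proof. by move/ideal_lideal/lidealMl; apply. Qed.

Lemma idealMr I r x : is_ideal I -> I x -> I (x * r).
Proof. by case=> _ _ _; apply. Qed.

Lemma idealI I K : is_ideal I -> is_ideal K -> is_ideal (fun x => I x /\ K x).
Proof.
move=> hI hK; split=> [|x y [Ix Kx] [Iy Ky]|r x [Ix Kx]|r x [Ix Kx]].
- by split; apply: ideal0.
- by split; apply: idealB.
- by split; apply: idealMl.
- by split; apply: idealMr.
Qed.

Lemma ideal_bigcap (T : Type) (P : T -> Prop) (F : T -> R -> Prop) :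
  (forall t, P t -> is_ideal (F t)) -> is_ideal (fun x => forall t, P t -> F t x).
Proof.
move=> hF; split=> [t /hF|x y Fx Fy t Pt|r x Fx t Pt|r x Fx t Pt].
- exact: ideal0.
- by apply: idealB (hF t Pt) (Fx t Pt) (Fy t Pt).
- by apply: idealMl _ (hF t Pt) (Fx t Pt).
- by apply: idealMr _ (hF t Pt) (Fx t Pt).
Qed.

Definition ideal_add I K x := exists i k, [/\ I i, K k & x = i + k].

Lemma ideal_add_ideal I K : is_ideal I -> is_ideal K -> is_ideal (ideal_add I K).
Proof.
move=> hI hK; split.
- by exists 0, 0; split; [apply: ideal0|apply: ideal0|rewrite addr0].
- move=> _ _ [i [k [Ii Kk ->]]] [i' [k' [Ii' Kk' ->]]].
  by exists (i - i'), (k - k'); split; [apply: idealB|apply: idealB|rewrite opprD addrACA].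
- move=> r _ [i [k [Ii Kk ->]]].
  by exists (r * i), (r * k); split; [apply: idealMl|apply: idealMl|rewrite mulrDr].
- move=> r _ [i [k [Ii Kk ->]]].
  by exists (i * r), (k * r); split; [apply: idealMr|apply: idealMr|rewrite mulrDl].
Qed.

Definition ideal_span u x := exists s : seq (R * R), x = \sum_(p <- s) p.1 * u * p.2.

Lemma ideal_span_ideal u : is_ideal (ideal_span u).
Proof.
split.
- by exists [::]; rewrite big_nil.
- move=> _ _ [s ->] [t ->]; exists (s ++ map (fun p => (- p.1, p.2)) t).
  rewrite big_cat big_map -sumrN; congr (_ + _); apply: eq_bigr => p _.
  by rewrite !mulNr.
- move=> r _ [s ->]; exists (map (fun p => (r * p.1, p.2)) s).
  by rewrite big_map mulr_sumr; apply: eq_bigr => p _; rewrite !mulrA.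
- move=> r _ [s ->]; exists (map (fun p => (p.1, p.2 * r)) s).
  by rewrite big_map mulr_suml; apply: eq_bigr => p _; rewrite !mulrA.
Qed.

Lemma ideal_span_sub I u : is_ideal I -> subsetR (ideal_span u) I <-> I u.
Proof.
move=> hI; split=> [|Iu _ [s ->]].
  by apply; exists [:: (1, 1)]; rewrite big_seq1 /= mul1r mulr1.
elim: s => [|p s IHs]; first by rewrite big_nil; apply: ideal0.
by rewrite big_cons; apply: idealD hI (idealMr _ hI (idealMl _ hI Iu)) IHs.
Qed.

Lemma chain_union_lideal (C : (R -> Prop) -> Prop) :
  (forall P, C P -> is_left_ideal P) -> total_on C (@subsetR R) -> (exists P, C P) ->
  is_left_ideal (fun x => exists2 P, C P & P x).
Proof.
move=> hC Ctot [P0 CP0]; split.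
- by exists P0 => //; exact: lideal0 (hC _ CP0).
- move=> x y [P CP Px] [Q CQ Qy].
  have [PQ|QP] := Ctot P Q CP CQ.
    by exists Q => //; apply: lidealB (hC _ CQ) (PQ _ Px) Qy.
  by exists P => //; apply: lidealB (hC _ CP) Px (QP _ Qy).
- by move=> r x [P CP Px]; exists P => //; apply: lidealMl _ (hC _ CP) Px.
Qed.

Lemma chain_union_ideal (C : (R -> Prop) -> Prop) :
  (forall P, C P -> is_ideal P) -> total_on C (@subsetR R) -> (exists P, C P) ->
  is_ideal (fun x => exists2 P, C P & P x).
Proof.
move=> hC Ctot neC; apply: ideal_of_lideal.
  by apply: chain_union_lideal => // P /hC/ideal_lideal.
by move=> r x [P CP Px]; exists P => //; apply: idealMr _ (hC _ CP) Px.
Qed.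

Lemma exists_maximal_proper (good : (R -> Prop) -> Prop) I :
  (forall C, (forall P, C P -> good P) -> total_on C (@subsetR R) -> (exists P, C P) ->
     good (fun x => exists2 P, C P & P x)) ->
  good I -> ~ I 1 ->
  exists M, [/\ good M, ~ M 1, subsetR I M &
             forall N, good N -> subsetR M N -> subsetR N M \/ N 1].
Proof.
move=> good_chain gI nI1.
have [C gC Ctot neC|M [[gM nM1] IM Mmax]] :=
  Zorn_above (good := fun X => good X /\ ~ X 1) _ (conj gI nI1).
  split; first by apply: good_chain => // P /gC [].
  by case=> P /gC [].
exists M; split => // N gN MN.
by have [|nN1] := pselect (N 1); [right | left; apply: Mmax].
Qed.

Lemma maximal_ideal_exists I : is_ideal I -> ~ I 1 ->
  exists M, maximal_ideal M /\ subsetR I M.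
Proof.
move=> hI nI1; have [|M [hM nM1 IM Mmax]] := exists_maximal_proper _ hI nI1.
  exact: chain_union_ideal.
by exists M.
Qed.

Lemma maximal_left_ideal_exists L : is_left_ideal L -> ~ L 1 ->
  exists M, maximal_left_ideal M /\ subsetR L M.
Proof.
move=> hL nL1; have [|M [hM nM1 LM Mmax]] := exists_maximal_proper _ hL nL1.
  exact: chain_union_lideal.
by exists M.
Qed.

Lemma maximal_ideal_ideal M : maximal_ideal M -> is_ideal M. Proof. by case. Qed.

Lemma maximal_ideal_sub M N :
  maximal_ideal M -> maximal_ideal N -> subsetR M N -> subsetR N M.
Proof. by move=> [_ _ Mmax] [hN nN1 _] MN; case: (Mmax N hN MN). Qed.

Lemma maximal_ideal_grow M I x :
  maximal_ideal M -> is_ideal I -> subsetR M I -> I x -> ~ M x -> I 1.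
Proof. by case=> _ _ Mmax hI MI Ix nMx; case: (Mmax I hI MI) => // /(_ x Ix). Qed.

Lemma maximal_ideal_compl M x : maximal_ideal M -> M x -> M (1 - x) -> False.
Proof. by move=> [hM nM1 _] Mx M1x; apply: nM1; rewrite -(subrK x 1); apply: idealD. Qed.

Lemma maximal_ideal_prime M x y :
  maximal_ideal M -> ~ M x -> ~ M y -> exists r, ~ M (x * r * y).
Proof.
move=> hM nMx nMy; apply: contrapT => all_in.
pose T z := forall r, M (z * r * y).
have hM' := maximal_ideal_ideal hM.
have hT : is_ideal T.
  split=> [r|z w Tz Tw r|s z Tz r|s z Tz r].
  - by rewrite !mul0r; apply: ideal0.
  - by rewrite !mulrBl; apply: idealB hM' (Tz r) (Tw r).
  - by rewrite -!mulrA; apply: idealMl _ hM' _; rewrite !mulrA; apply: Tz.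
  - by rewrite -(mulrA z s r).
have MT : subsetR M T by move=> z Mz r; rewrite -mulrA; apply: idealMr _ hM' Mz.
have Tx : T x by move=> r; apply: contrapT => nM; apply: all_in; exists r.
by apply: nMy; have := maximal_ideal_grow hM hT MT Tx nMx 1; rewrite !mul1r.
Qed.

Lemma ideal_add_one I K : is_ideal I -> is_ideal K ->
  (forall M, maximal_ideal M -> subsetR I M -> subsetR K M -> False) ->
  exists i k, [/\ I i, K k & i + k = 1].
Proof.
move=> hI hK noM; apply: contrapT => no1.
have [|M [hM IKM]] := maximal_ideal_exists (ideal_add_ideal hI hK).
  by case=> i [k [Ii Kk /esym ik]]; apply: no1; exists i, k.
apply: (noM M hM) => x ?; apply: IKM.
- by exists x, 0; rewrite addr0; split => //; apply: ideal0.
- by exists 0, x; rewrite add0r; split => //; apply: ideal0.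
Qed.

Lemma jacobson_lideal : is_left_ideal J.
Proof.
split=> [M [hM _ _]|x y Jx Jy M maxM|r x Jx M maxM]; first exact: lideal0.
- by have [hM _ _] := maxM; apply: lidealB hM (Jx M maxM) (Jy M maxM).
- by have [hM _ _] := maxM; apply: lidealMl _ hM (Jx M maxM).
Qed.

Lemma jacobson_left_unit j : J j -> exists c, c * (1 - j) = 1.
Proof.
move=> Jj; apply: contrapT => no_inv.
pose L x := exists r, x = r * (1 - j).
have hL : is_left_ideal L.
  split=> [|_ _ [r ->] [s ->]|s _ [r ->]]; first by exists 0; rewrite mul0r.
  - by exists (r - s); rewrite mulrBl.
  - by exists (s * r); rewrite mulrA.
have [|M [maxM LM]] := maximal_left_ideal_exists hL.
  by case=> r r1; apply: no_inv; exists r.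
have [hM nM1 _] := maxM; apply: nM1; rewrite -(subrK j 1).
by apply: lidealD hM _ (Jj M maxM); apply: LM; exists 1; rewrite mul1r.
Qed.

Lemma left_inverse_1subC a b c :
  c * (1 - b * a) = 1 -> (1 + a * c * b) * (1 - a * b) = 1.
Proof.
move=> cba; have acb : a * (c * (1 - b * a)) * b = a * c * b - a * c * b * (a * b).
  by rewrite mulrBr mulr1 mulrBr mulrBl !mulrA.
rewrite cba mulr1 in acb.
by rewrite mulrDl mul1r mulrBr mulr1 -acb addrNK.
Qed.

Lemma jacobsonMr j s : J j -> J (j * s).
Proof.
move=> Jj M maxM; apply: contrapT => nMjs.
have [hM nM1 Mmax] := maxM.
pose L x := exists l r, M l /\ x = l + r * (j * s).
have hL : is_left_ideal L.
  split=> [|_ _ [l [r [Ml ->]]] [l' [r' [Ml' ->]]]|t _ [l [r [Ml ->]]]].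
  - by exists 0, 0; split; [apply: lideal0|rewrite mul0r addr0].
  - exists (l - l'), (r - r'); split; first exact: lidealB.
    by rewrite mulrBl opprD addrACA.
  - exists (t * l), (t * r); split; first exact: lidealMl.
    by rewrite mulrDr mulrA.
have ML : subsetR M L by move=> l Ml; exists l, 0; rewrite mul0r addr0.
have [LM|[l [r [Ml one]]]] := Mmax L hL ML.
  by apply: nMjs; apply: LM; exists 0, 1; split; [apply: lideal0|rewrite mul1r add0r].
have [c cJ] := jacobson_left_unit (lidealMl (s * r) jacobson_lideal Jj).
have inv : (1 + r * j * c * s) * (1 - r * (j * s)) = 1.
  by rewrite mulrA; apply: left_inverse_1subC; rewrite mulrA.
have lE : 1 - r * (j * s) = l by rewrite one addrK.
by apply: nM1; rewrite -inv lE; apply: lidealMl.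
Qed.

Lemma jacobson_ideal : is_ideal J.
Proof. by apply: ideal_of_lideal jacobson_lideal _ => r x; apply: jacobsonMr. Qed.

Lemma jacobson_sub_maximal M : maximal_ideal M -> subsetR J M.
Proof.
move=> maxM x Jx; apply: contrapT => nMx.
have [|m [j [Mm Jj mj]]] := ideal_add_one (maximal_ideal_ideal maxM) jacobson_ideal.
  by move=> N maxN MN JN; apply/nMx/(maximal_ideal_sub maxM maxN MN)/JN.
have [c cj] := jacobson_left_unit Jj.
have [hM nM1 _] := maxM; apply: nM1.
by rewrite -cj -mj addrK; apply: idealMl.
Qed.

Definition orthJ a b := forall r, J (a * r * b).

Lemma orthJ_ideall b : is_ideal (orthJ ^~ b).
Proof.
have hJ := jacobson_ideal.
split=> [r|x y xb yb r|s x xb r|s x xb r].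
- by rewrite !mul0r; apply: ideal0.
- by rewrite !mulrBl; apply: idealB hJ (xb r) (yb r).
- by rewrite -!mulrA; apply: idealMl _ hJ _; rewrite !mulrA; apply: xb.
- by rewrite -(mulrA x s r); apply: xb.
Qed.

Lemma orthJ_idealr a : is_ideal (orthJ a).
Proof.
have hJ := jacobson_ideal.
split=> [r|x y ax ay r|s x ax r|s x ax r].
- by rewrite mulr0; apply: ideal0.
- by rewrite mulrBr; apply: idealB hJ (ax r) (ay r).
- by rewrite mulrA -(mulrA a r s); apply: ax.
- by rewrite mulrA; apply: idealMr _ hJ (ax r).
Qed.

Lemma maximal_ideal_split M e : maximal_ideal M -> orthJ e (1 - e) -> M e \/ M (1 - e).
Proof.
move=> maxM eJ; have [|nMe] := pselect (M e); [by left | right].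
apply: contrapT => nM1e; have [r] := maximal_ideal_prime maxM nMe nM1e.
by apply; apply: jacobson_sub_maximal.
Qed.

Lemma fullP u : full u <-> forall M, maximal_ideal M -> ~ M u.
Proof.
split=> [[s su1] M [hM nM1 _] Mu | notin].
  by apply: nM1; rewrite -su1; apply: (ideal_span_sub u hM).2 Mu _ (ex_intro _ s erefl).
apply: contrapT => nfull.
have [|M [maxM spanM]] := maximal_ideal_exists (ideal_span_ideal u).
  by case=> s /esym s1; apply: nfull; exists s.
by apply: (notin M maxM); apply/(ideal_span_sub u (maximal_ideal_ideal maxM)).
Qed.

Lemma full_sub_maximal M u x y :
  maximal_ideal M -> full u -> M x -> M y -> x - y = u -> False.
Proof.
move=> maxM /fullP/(_ M maxM) nMu Mx My xy; apply: nMu; rewrite -xy.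
exact: idealB (maximal_ideal_ideal maxM) Mx My.
Qed.

Lemma orthJ_outside_ideal N :
  maximal_ideal N -> is_ideal (fun x => exists2 b, ~ N b & orthJ x b).
Proof.
move=> maxN; split=> [|x y [b nNb xb] [c nNc yc]|s x [b nNb xb]|s x [b nNb xb]].
- by exists 1; [case: maxN | apply: ideal0 (orthJ_ideall 1)].
- have [r nNbrc] := maximal_ideal_prime maxN nNb nNc.
  exists (b * r * c) => //; apply: idealB (orthJ_ideall _) _ _.
    by apply: idealMr _ (orthJ_idealr x) _; apply: idealMr _ (orthJ_idealr x) xb.
  exact: idealMl _ (orthJ_idealr y) yc.
- by exists b => //; apply: idealMl _ (orthJ_ideall b) xb.
- by exists b => //; apply: idealMr _ (orthJ_ideall b) xb.
Qed.

Lemma orthJ_one_mod_ideal I :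
  is_ideal I -> is_ideal (fun b => exists2 d, I (1 - d) & orthJ d b).
Proof.
move=> hI; split=> [|x y [d Id dx] [d' Id' d'y]|s x [d Id dx]|s x [d Id dx]].
- by exists 1; [rewrite subrr; apply: ideal0 | apply: ideal0 (orthJ_idealr 1)].
- exists (d * d').
    have -> : 1 - d * d' = (1 - d) + d * (1 - d') by rewrite mulrBr mulr1 addrA subrK.
    exact: idealD hI Id (idealMl _ hI Id').
  apply: idealB (orthJ_idealr _) _ _.
    exact: idealMr _ (orthJ_ideall x) dx.
  exact: idealMl _ (orthJ_ideall y) d'y.
- by exists d => //; apply: idealMl _ (orthJ_idealr d) dx.
- by exists d => //; apply: idealMr _ (orthJ_idealr d) dx.
Qed.

Definition Vmax y (P : MaxSpec R) := proj1_sig P y.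

Lemma max_closed_Vmax y : max_closed (Vmax y).
Proof.
exists (ideal_span y); split=> [|[M maxM]]; first exact: ideal_span_ideal.
by symmetry; apply: ideal_span_sub; apply: maximal_ideal_ideal.
Qed.

Lemma max_closed_iff (S S' : MaxSpec R -> Prop) :
  (forall P, S P <-> S' P) -> max_closed S -> max_closed S'.
Proof.
move=> SS' [I [hI SI]]; exists I; split => // P.
by split=> [/SS'/SI|/SI/SS'].
Qed.

Lemma orthJ_clopen e : orthJ e (1 - e) ->
  [/\ max_closed (Vmax e), max_closed (fun P => ~ Vmax e P),
      max_closed (Vmax (1 - e)) & max_closed (fun P => ~ Vmax (1 - e) P)].
Proof.
move=> eJ.
have one P : Vmax e P \/ Vmax (1 - e) P by case: P => M maxM; apply: maximal_ideal_split.
have not_both P : Vmax e P -> Vmax (1 - e) P -> False.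
  by case: P => M maxM; apply: maximal_ideal_compl.
split; try exact: max_closed_Vmax.
- apply: max_closed_iff (max_closed_Vmax (1 - e)) => P.
  by split=> [M1e Me|nMe]; [apply: not_both Me M1e | case: (one P)].
- apply: max_closed_iff (max_closed_Vmax e) => P.
  by split=> [Me M1e|nM1e]; [apply: not_both Me M1e | case: (one P)].
Qed.

Lemma feckly_clean_strongly_zero_dimensional :
  feckly_clean R -> strongly_zero_dimensional (@max_closed R).
Proof.
move=> fc A B [I [hI AI]] [K [hK BK]] AB.
have [|i [k [Ii Kk ik]]] := ideal_add_one hI hK.
  by move=> M maxM IM KM; apply: (AB (exist _ M maxM)); split; [apply/AI | apply/BK].
have [e [u [ieu fu eJ]]] := fc i.
have [ce cne c1e cn1e] := orthJ_clopen eJ.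
exists (Vmax (1 - e)), (Vmax e); split => //.
- by move=> [M maxM] [M1e Me]; apply: maximal_ideal_compl maxM Me M1e.
- move=> [M maxM] /AI IM; have [Me|//] := maximal_ideal_split maxM eJ.
  by exfalso; apply: (full_sub_maximal maxM fu (IM _ Ii) Me); rewrite ieu addrC addKr.
- move=> [M maxM] /BK KM; have [//|M1e] := maximal_ideal_split maxM eJ.
  exfalso; apply: (full_sub_maximal maxM fu M1e (KM _ Kk)).
  by rewrite -ik ieu addrAC addrK addrC addKr.
Qed.

Definition maximal_separated := forall M N, maximal_ideal M -> maximal_ideal N ->
  (exists x, ~ (M x <-> N x)) -> exists a b, [/\ ~ M a, ~ N b & orthJ a b].

Lemma feckly_clean_maximal_separated : feckly_clean R -> maximal_separated.
Proof.
move=> fc M N maxM maxN [x MNx].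
have [|m [n [Mm Nn mn]]] :=
  ideal_add_one (maximal_ideal_ideal maxM) (maximal_ideal_ideal maxN).
  move=> L maxL ML NL; apply: MNx.
  by split=> [/ML/(maximal_ideal_sub maxN maxL NL) | /NL/(maximal_ideal_sub maxM maxL ML)].
have [e [u [meu fu eJ]]] := fc m.
exists e, (1 - e); split => // [Me | N1e].
- by apply: (full_sub_maximal maxM fu Mm Me); rewrite meu addrC addKr.
- apply: (full_sub_maximal maxN fu N1e Nn).
  by rewrite -mn meu addrAC addrK addrC addKr.
Qed.

Lemma not_subsetR I M : ~ subsetR I M -> exists2 x, I x & ~ M x.
Proof.
move=> nIM; apply: contrapT => no_x; apply: nIM => x Ix.
by apply: contrapT => nMx; apply: no_x; exists x.
Qed.

Section LiftClopen.
Variables I K : R -> Prop.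
Hypotheses (hI : is_ideal I) (hK : is_ideal K).
Hypothesis cover : forall M, maximal_ideal M -> subsetR I M \/ subsetR K M.
Hypothesis disjoint : forall M, maximal_ideal M -> subsetR I M -> subsetR K M -> False.
Hypothesis separated : maximal_separated.

Lemma exists_orthJ_lift : exists d k, [/\ I (1 - d), K k & orthJ d (1 - k)].
Proof.
have [|k [b [Kk [d Id db] kb]]] := ideal_add_one hK (orthJ_one_mod_ideal hI).
  move=> N maxN KN BN.
  have [|c [x [Ic [b nNb xb] cx]]] := ideal_add_one hI (orthJ_outside_ideal maxN).
    move=> M maxM IM AM.
    have [y Iy nNy] := not_subsetR (fun IN => disjoint maxN IN KN).
    have [|a [b [nMa nNb ab]]] := separated maxM maxN.
      by exists y => MNy; apply/nNy/MNy/IM.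
    by apply/nMa/AM; exists b.
  by apply/nNb/BN; exists x; rewrite // -cx addrK.
have bE : 1 - k = b by rewrite -kb addrC addKr.
by exists d, k; rewrite bE.
Qed.

Lemma exists_orthJ_split : exists e, [/\ K e, I (1 - e) & orthJ e (1 - e)].
Proof.
have [d [k [Id Kk dk]]] := exists_orthJ_lift.
pose P x := K x /\ orthJ x (1 - k).
pose Q y := I y /\ forall x, orthJ x (1 - k) -> orthJ x y.
have hP : is_ideal P := idealI hK (orthJ_ideall _).
have hQ : is_ideal Q := idealI hI (ideal_bigcap (fun x _ => orthJ_idealr x)).
have [|e [f [[Ke ek] [If fQ] ef]]] := ideal_add_one hP hQ.
  move=> M maxM PM QM; have [IM|KM] := cover maxM.
  - have [k0 Kk0 nMk0] := not_subsetR (disjoint maxM IM).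
    have nMd : ~ M d by move/(maximal_ideal_compl maxM); apply; apply: IM.
    have [r nMdrk0] := maximal_ideal_prime maxM nMd nMk0.
    apply/nMdrk0/PM; split; first exact: idealMl.
    by apply: idealMr _ (orthJ_ideall _) _; apply: idealMr _ (orthJ_ideall _) dk.
  - have [i0 Ii0 nMi0] := not_subsetR (fun IM => disjoint maxM IM KM).
    have nM1k : ~ M (1 - k) by apply: maximal_ideal_compl maxM (KM _ Kk).
    have [r nMi0rk] := maximal_ideal_prime maxM nMi0 nM1k.
    apply/nMi0rk/QM; split; first by apply: idealMr _ hI (idealMr _ hI Ii0).
    by move=> x xk; apply: idealMl _ (orthJ_idealr x) xk.
have fE : 1 - e = f by rewrite -ef addrC addKr.
by exists e; rewrite fE; split => //; apply: fQ.
Qed.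

Lemma feckly_clean_elt_of_split a :
  (forall M, maximal_ideal M -> M a -> subsetR I M) ->
  (forall M, maximal_ideal M -> M (1 - a) -> subsetR K M) -> feckly_clean_elt a.
Proof.
move=> aI aK; have [e [Ke Ie eJ]] := exists_orthJ_split.
exists e, (a - e); split => //; first by rewrite subrKC.
apply/fullP => M maxM Mu; have hM := maximal_ideal_ideal maxM.
have [IM|KM] := cover maxM.
- apply: (disjoint maxM IM); apply: aK => //.
  have -> : 1 - a = (1 - e) - (a - e) by rewrite opprB addrA subrK.
  exact: idealB hM (IM _ Ie) Mu.
- apply: (disjoint maxM _ KM); apply: aI => //.
  by rewrite -(subrKC e a); apply: idealD hM (KM _ Ke) Mu.
Qed.

End LiftClopen.

Lemma strongly_zero_dimensional_split a :
  strongly_zero_dimensional (@max_closed R) ->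
  exists I K, [/\ is_ideal I, is_ideal K,
    forall M, maximal_ideal M -> subsetR I M \/ subsetR K M,
    forall M, maximal_ideal M -> subsetR I M -> subsetR K M -> False &
    forall M, maximal_ideal M -> (M a -> subsetR I M) /\ (M (1 - a) -> subsetR K M)].
Proof.
move=> szd.
have [|C1 [C2 [[[I [hI C1I]] [K [hK C1K]]] _ C12 aC1 aC2]]] :=
  szd _ _ (max_closed_Vmax a) (max_closed_Vmax (1 - a)).
  by move=> [M maxM] []; apply: maximal_ideal_compl.
exists I, K; split => // M maxM; pose P : MaxSpec R := exist _ M maxM.
- by have [/(C1I P)|/(C1K P)] := pselect (C1 P); [left | right].
- by move=> /(C1I P) C1P /(C1K P).
- split=> [Ma | M1a]; first exact/(C1I P)/aC1.
  by apply/(C1K P) => C1P; apply: (C12 P); split; last exact: aC2.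
Qed.

End Ideals.

Theorem corollary3p6 (R : pzRingType) :
  feckly_clean R <->
  (strongly_zero_dimensional (@max_closed R) /\
   (forall M N : MaxSpec R, (exists x : R, ~ (proj1_sig M x <-> proj1_sig N x)) ->
      exists a b : R, [/\ ~ proj1_sig M a, ~ proj1_sig N b &
                         forall r : R, jacobson (a * r * b)])).
Proof.
split=> [fc | [szd sep] a].
  split; first exact: feckly_clean_strongly_zero_dimensional.
  by move=> [M maxM] [N maxN]; apply: feckly_clean_maximal_separated.
have [I [K [hI hK cover disjoint aIK]]] := strongly_zero_dimensional_split a szd.
apply: (feckly_clean_elt_of_split hI hK cover disjoint) => [M N maxM maxN | M maxM | M maxM].
- exact: (sep (exist _ M maxM) (exist _ N maxN)).
- exact: (aIK M maxM).1.
- exact: (aIK M maxM).2.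
Qed.
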